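(* Let $\sigma_1,\sigma_2>0$ and let $\gamma:\mathbb{S}^1\times[0,T)\to\mathbb{R}^2$ be a smooth family of closed embedded plane curves evolving under $\partial_t\gamma=(\sigma_1k+\sigma_2)\nu$. Suppose that the winding number of the initial curve is positive. Then $T<\infty$ (i.e. the solution cannot exist on $[0,\infty)$).
   Context: $\nu$ is the inward unit normal (the unit tangent rotated by $\pi/2$), $k$ the curvature, $s$ arclength, and the winding number is $\omega=\frac1{2\pi}\int_\gamma k\,ds$. *)

From Stdlib Require Import Reals.
From Coquelicot Require Import Coquelicot.
Open Scope R_scope.

(* A plane curve family gamma(u,t) = (X u t, Y u t), u in R parametrising S^1 = R/Z
   (period 1), t the time. *)

Fixpoint Ck_strip (a : R) (b : Rbar) (n : nat) (f : R -> R -> R) : Prop :=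
  match n with
  | O => forall u t, a < t -> Rbar_lt (Finite t) b ->
           continuous (fun p : R * R => f (fst p) (snd p)) (u, t)
  | S m =>
      (forall u t, a < t -> Rbar_lt (Finite t) b -> ex_derive (fun v => f v t) u) /\
      (forall u t, a < t -> Rbar_lt (Finite t) b -> ex_derive (fun s => f u s) t) /\
      Ck_strip a b m (fun u t => Derive (fun v => f v t) u) /\
      Ck_strip a b m (fun u t => Derive (fun s => f u s) t)
  end.

Definition smooth_strip (a : R) (b : Rbar) (f : R -> R -> R) : Prop :=
  forall n, Ck_strip a b n f.

Definition du (f : R -> R -> R) : R -> R -> R := fun u t => Derive (fun v => f v t) u.

Definition speed (X Y : R -> R -> R) (u t : R) : R :=
  sqrt (du X u t ^ 2 + du Y u t ^ 2).

Definition tanx (X Y : R -> R -> R) (u t : R) : R := du X u t / speed X Y u t.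
Definition tany (X Y : R -> R -> R) (u t : R) : R := du Y u t / speed X Y u t.

Definition nux (X Y : R -> R -> R) (u t : R) : R := - tany X Y u t.
Definition nuy (X Y : R -> R -> R) (u t : R) : R := tanx X Y u t.

(* signed curvature k = <gamma_ss, nu> = (x_u y_uu - y_u x_uu) / |gamma_u|^3 *)
Definition curv (X Y : R -> R -> R) (u t : R) : R :=
  (du X u t * du (du Y) u t - du Y u t * du (du X) u t) / (speed X Y u t ^ 3).

Definition winding (X Y : R -> R -> R) (t : R) : R :=
  / (2 * PI) * RInt (fun u => curv X Y u t * speed X Y u t) 0 1.

(* Along the flow the total curvature Theta(t) = int k ds is constant, because
   k ds = d(theta) for the tangent angle theta, so d/dt (k ds) = d/du (theta_t) and the
   periodic function theta_t integrates to zero.  The length L(t) = int ds satisfies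
   L' = - int (sigma1 k + sigma2) k ds <= - sigma2 Theta, so a positive winding number
   makes L decrease at least linearly; since L >= 0, the flow cannot exist for all time. *)

From Stdlib Require Import Reals Lra.
From Coquelicot Require Import Coquelicot.
Open Scope R_scope.

Definition dt (f : R -> R -> R) : R -> R -> R := fun u t => Derive (fun s => f u s) t.

Definition total_curvature (X Y : R -> R -> R) (t : R) : R :=
  RInt (fun u => curv X Y u t * speed X Y u t) 0 1.

Definition curve_length (X Y : R -> R -> R) (t : R) : R :=
  RInt (fun u => speed X Y u t) 0 1.

Lemma total_curvature_winding X Y t :
  total_curvature X Y t = 2 * PI * winding X Y t.
Proof.
  unfold winding, total_curvature.
  rewrite <- Rmult_assoc, Rinv_r, Rmult_1_l; [reflexivity |].
  apply Rmult_integral_contrapositive_currified; [lra | apply PI_neq0].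
Qed.

Lemma continuity_2d_pt_pow f n u t :
  continuity_2d_pt f u t -> continuity_2d_pt (fun u t => f u t ^ n) u t.
Proof.
  intros Hf. induction n as [|n IH]; simpl.
  - apply continuity_2d_pt_const.
  - apply continuity_2d_pt_mult; assumption.
Qed.

Lemma continuity_2d_pt_div f g u t :
  continuity_2d_pt f u t -> continuity_2d_pt g u t -> g u t <> 0 ->
  continuity_2d_pt (fun u t => f u t / g u t) u t.
Proof.
  intros Hf Hg Hg0. apply continuity_2d_pt_mult; [exact Hf|].
  apply continuity_2d_pt_inv; assumption.
Qed.

Lemma continuity_2d_pt_sqrt f u t :
  continuity_2d_pt f u t -> continuity_2d_pt (fun u t => sqrt (f u t)) u t.
Proof.
  intros Hf. apply continuity_1d_2d_pt_comp; [|exact Hf].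
  apply continuity_pt_filterlim, continuous_sqrt.
Qed.

Lemma continuity_2d_pt_swap f u t :
  continuity_2d_pt f u t -> continuity_2d_pt (fun t u => f u t) t u.
Proof.
  intros H eps. destruct (H eps) as [d Hd]. exists d. intros. apply Hd; assumption.
Qed.

Lemma continuity_2d_pt_continuous_fst f u t :
  continuity_2d_pt f u t -> continuous (fun v => f v t) u.
Proof.
  intros H. apply continuity_pt_filterlim. intros eps Heps.
  destruct (H (mkposreal _ Heps)) as [d Hd]. exists d. split; [apply cond_pos|].
  intros v [_ Hv]. apply Hd; [exact Hv|]. rewrite Rminus_eq_0, Rabs_R0. apply cond_pos.
Qed.

Lemma locally_2d_snd_gt c (P : R -> R -> Prop) u t : c < t ->
  (forall u' t', c < t' -> P u' t') -> locally_2d P u t.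
Proof.
  intros Ht HP. assert (Hp : 0 < t - c) by lra.
  exists (mkposreal _ Hp). intros u' t' _ H'. apply HP.
  simpl in H'. apply Rabs_def2 in H'. lra.
Qed.

Lemma locally_2d_fst_gt c (P : R -> R -> Prop) t u : c < t ->
  (forall t' u', c < t' -> P t' u') -> locally_2d P t u.
Proof.
  intros Ht HP. assert (Hp : 0 < t - c) by lra.
  exists (mkposreal _ Hp). intros t' u' H' _. apply HP.
  simpl in H'. apply Rabs_def2 in H'. lra.
Qed.

(* Continuity of [F] along the slice [t0] does not make nearby slices integrable,
   hence the [ex_RInt] premise. *)
Lemma RInt_param_continuous_slices (F : R -> R -> R) (a b t0 : R) : a <= b ->
  (forall u, a <= u <= b -> continuity_2d_pt F u t0) ->
  forall eps : posreal, exists d : posreal, forall t, Rabs (t - t0) < d ->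
    ex_RInt (fun u => F u t) a b ->
    Rabs (RInt (fun u => F u t) a b - RInt (fun u => F u t0) a b) <= (b - a) * eps.
Proof.
  intros Hab HF eps.
  destruct (uniform_continuity_2d_1d F a b t0 HF eps) as [d Hd].
  exists d. intros t Ht Hex.
  assert (Hex0 : ex_RInt (fun u => F u t0) a b).
  { apply (ex_RInt_continuous (V := R_CompleteNormedModule)). intros z Hz.
    rewrite Rmin_left, Rmax_right in Hz by lra.
    apply continuity_2d_pt_continuous_fst, HF, Hz. }
  apply Rabs_lt_between' in Ht.
  rewrite <- (RInt_minus (V := R_CompleteNormedModule)) by assumption.
  apply abs_RInt_le_const; [exact Hab | apply (ex_RInt_minus (V := R_NormedModule)); assumption |].
  intros u Hu. left. apply Hd; try lra. rewrite Rminus_eq_0, Rabs_R0. apply cond_pos.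
Qed.

Lemma is_derive_RInt_param_halfline (F dF : R -> R -> R) a b c t : c < t ->
  (forall u s, c < s -> is_derive (fun z => F u z) s (dF u s)) ->
  (forall u s, c < s -> continuity_2d_pt dF u s) ->
  (forall u s, c < s -> continuity_2d_pt F u s) ->
  is_derive (fun s => RInt (fun u => F u s) a b) t (RInt (fun u => dF u t) a b).
Proof.
  intros Ht HD HdC HC.
  replace (RInt (fun u => dF u t) a b) with (RInt (fun u => Derive (fun z => F u z) t) a b).
  2:{ apply RInt_ext. intros u _. apply is_derive_unique, HD, Ht. }
  apply (is_derive_RInt_param (fun s u => F u s)).
  - apply (filter_imp (fun y => c < y)); [|apply open_gt, Ht].
    intros y Hy u _. eexists. apply HD, Hy.
  - intros u _. apply (continuity_2d_pt_ext_loc (fun s u => dF u s)).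
    + apply (locally_2d_fst_gt c); [exact Ht|]. intros t' u' Ht'.
      symmetry. apply is_derive_unique, HD, Ht'.
    + apply (continuity_2d_pt_swap dF), HdC, Ht.
  - apply (filter_imp (fun y => c < y)); [|apply open_gt, Ht].
    intros y Hy. apply (ex_RInt_continuous (V := R_CompleteNormedModule)). intros z _.
    apply continuity_2d_pt_continuous_fst, HC, Hy.
Qed.

Lemma increment_le_of_is_derive_le (f df : R -> R) (s t m : R) : s <= t ->
  (forall x, s <= x <= t -> is_derive f x (df x)) ->
  (forall x, s <= x <= t -> df x <= m) ->
  f t <= f s + m * (t - s).
Proof.
  intros Hst Hd Hm.
  destruct (MVT_gen f s t df) as [c [Hc Heq]].
  - intros x Hx. rewrite Rmin_left, Rmax_right in Hx by lra. apply Hd. lra.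
  - intros x Hx. rewrite Rmin_left, Rmax_right in Hx by lra.
    apply continuity_pt_filterlim, (ex_derive_continuous (K := R_AbsRing) (V := R_NormedModule)).
    exists (df x). apply Hd, Hx.
  - rewrite Rmin_left, Rmax_right in Hc by lra.
    assert (df c <= m) by (apply Hm, Hc). nra.
Qed.

Lemma nonneg_no_linear_decay (f : R -> R) (s c : R) : 0 < c ->
  (forall t, s <= t -> 0 <= f t) ->
  (forall t, s <= t -> f t <= f s + - c * (t - s)) -> False.
Proof.
  intros Hc Hpos Hdecay.
  assert (Hfs := Hpos s (Rle_refl s)).
  assert (Hstep : 0 <= f s / c) by (apply Rdiv_le_0_compat; lra).
  assert (Hft := Hpos (s + f s / c + 1) ltac:(lra)).
  assert (Hdecay' := Hdecay (s + f s / c + 1) ltac:(lra)).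
  assert (Hdiv : c * (f s / c) = f s) by (field; lra).
  nra.
Qed.

Lemma du_periodic (f : R -> R -> R) : (forall u t, f (u + 1) t = f u t) ->
  forall u t, du f (u + 1) t = du f u t.
Proof.
  intros H u t. unfold du, Derive. f_equal. apply Lim_ext. intro h.
  replace (u + 1 + h) with ((u + h) + 1) by ring. rewrite !H. reflexivity.
Qed.

Lemma dt_periodic (f : R -> R -> R) : (forall u t, f (u + 1) t = f u t) ->
  forall u t, dt f (u + 1) t = dt f u t.
Proof.
  intros H u t. apply Derive_ext. intro s. apply H.
Qed.

Section SmoothStrip.

Variables (a : R) (b : Rbar) (f : R -> R -> R).
Hypothesis Hf : smooth_strip a b f.

Lemma smooth_strip_du : smooth_strip a b (du f).
Proof. intros n. exact (proj1 (proj2 (proj2 (Hf (S n))))). Qed.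

Lemma smooth_strip_dt : smooth_strip a b (dt f).
Proof. intros n. exact (proj2 (proj2 (proj2 (Hf (S n))))). Qed.

Lemma smooth_strip_continuity u t : a < t -> Rbar_lt t b -> continuity_2d_pt f u t.
Proof. intros Ha Hb. apply continuity_2d_pt_filterlim, (Hf O u t Ha Hb). Qed.

Lemma smooth_strip_ex_derive_u u t : a < t -> Rbar_lt t b -> ex_derive (fun v => f v t) u.
Proof. intros Ha Hb. exact (proj1 (Hf 1%nat) u t Ha Hb). Qed.

Lemma smooth_strip_ex_derive_t u t : a < t -> Rbar_lt t b -> ex_derive (fun s => f u s) t.
Proof. intros Ha Hb. exact (proj1 (proj2 (Hf 1%nat)) u t Ha Hb). Qed.

End SmoothStrip.

Lemma smooth_strip_du_dt_comm a f u t : smooth_strip a p_infty f -> a < t ->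
  du (dt f) u t = dt (du f) u t.
Proof.
  intros Hf Ht. apply Schwarz.
  - apply (locally_2d_snd_gt a); [exact Ht|]. intros u' t' Ht'.
    repeat split.
    + apply (smooth_strip_ex_derive_u a p_infty); easy.
    + apply (smooth_strip_ex_derive_t a p_infty); easy.
    + apply (smooth_strip_ex_derive_u a p_infty (dt f)); [apply smooth_strip_dt|..]; easy.
    + apply (smooth_strip_ex_derive_t a p_infty (du f)); [apply smooth_strip_du|..]; easy.
  - apply (smooth_strip_continuity a p_infty (du (dt f)));
      [apply smooth_strip_du, smooth_strip_dt|..]; easy.
  - apply (smooth_strip_continuity a p_infty (dt (du f)));
      [apply smooth_strip_dt, smooth_strip_du|..]; easy.
Qed.

Definition speed2 (X Y : R -> R -> R) (u t : R) : R := du X u t ^ 2 + du Y u t ^ 2.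

Definition cross_u_uu (X Y : R -> R -> R) (u t : R) : R :=
  du X u t * du (du Y) u t - du Y u t * du (du X) u t.

(* [k |gamma_u|], written without the square root of [speed]. *)
Definition curvature_density (X Y : R -> R -> R) (u t : R) : R :=
  cross_u_uu X Y u t / speed2 X Y u t.

Definition curvature_density_dt (X Y : R -> R -> R) (u t : R) : R :=
  ((dt (du X) u t * du (du Y) u t + du X u t * dt (du (du Y)) u t
    - dt (du Y) u t * du (du X) u t - du Y u t * dt (du (du X)) u t) * speed2 X Y u t
   - cross_u_uu X Y u t * (2 * du X u t * dt (du X) u t + 2 * du Y u t * dt (du Y) u t))
  / speed2 X Y u t ^ 2.

(* The time derivative theta_t of the tangent angle theta. *)
Definition tangent_angle_dt (X Y : R -> R -> R) (u t : R) : R :=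
  (du X u t * dt (du Y) u t - du Y u t * dt (du X) u t) / speed2 X Y u t.

Definition speed_dt (X Y : R -> R -> R) (u t : R) : R :=
  (2 * du X u t * dt (du X) u t + 2 * du Y u t * dt (du Y) u t) / (2 * speed X Y u t).

Lemma speed2_pos X Y u t : 0 < speed X Y u t -> 0 < speed2 X Y u t.
Proof.
  unfold speed, speed2. intros H.
  destruct (Rle_lt_or_eq_dec 0 (du X u t ^ 2 + du Y u t ^ 2)) as [Hlt|Heq]; [nra | exact Hlt |].
  rewrite <- Heq, sqrt_0 in H. lra.
Qed.

Lemma curv_mul_speed X Y u t : 0 < speed X Y u t ->
  curv X Y u t * speed X Y u t = curvature_density X Y u t.
Proof.
  intros H. assert (H2 : speed X Y u t ^ 2 = speed2 X Y u t).
  { unfold speed, speed2. rewrite pow2_sqrt; [reflexivity | nra]. }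
  unfold curv, curvature_density, cross_u_uu. rewrite <- H2. field. lra.
Qed.

Section SmoothCurveFamily.

Variables (a : R) (X Y : R -> R -> R).
Hypotheses (HX : smooth_strip a p_infty X) (HY : smooth_strip a p_infty Y).

Ltac smooth_partial := repeat first [apply smooth_strip_du | apply smooth_strip_dt]; assumption.

Ltac continuity_2d := repeat first
  [ apply continuity_2d_pt_div | apply continuity_2d_pt_plus | apply continuity_2d_pt_minus
  | apply continuity_2d_pt_mult | apply continuity_2d_pt_opp | apply continuity_2d_pt_sqrt
  | apply continuity_2d_pt_pow | apply continuity_2d_pt_const
  | (apply (smooth_strip_continuity a p_infty); [smooth_partial | lra | exact I]) ].

Ltac ex_derive_partial lem :=
  repeat split; try (apply (lem a p_infty); [smooth_partial | lra | exact I]).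

Section AtRegularPoint.

Variables (u t : R).
Hypotheses (Ht : a < t) (Hs : 0 < speed X Y u t).

Lemma continuity_2d_pt_curv : continuity_2d_pt (curv X Y) u t.
Proof.
  assert (Hs3 : speed X Y u t ^ 3 <> 0) by (apply pow_nonzero; lra).
  unfold curv. unfold speed in *. continuity_2d; assumption.
Qed.

Lemma continuity_2d_pt_speed : continuity_2d_pt (speed X Y) u t.
Proof. unfold speed. continuity_2d. Qed.

Lemma continuity_2d_pt_curvature_density : continuity_2d_pt (curvature_density X Y) u t.
Proof.
  assert (H := speed2_pos _ _ _ _ Hs).
  unfold curvature_density, cross_u_uu, speed2 in *. continuity_2d. lra.
Qed.

Lemma continuity_2d_pt_curvature_density_dt : continuity_2d_pt (curvature_density_dt X Y) u t.
Proof.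
  assert (H := speed2_pos _ _ _ _ Hs).
  assert (H2 : speed2 X Y u t ^ 2 <> 0) by (apply pow_nonzero; lra).
  unfold curvature_density_dt, cross_u_uu, speed2 in *. continuity_2d. assumption.
Qed.

Lemma continuity_2d_pt_speed_dt : continuity_2d_pt (speed_dt X Y) u t.
Proof.
  assert (H2 : 2 * speed X Y u t <> 0) by lra.
  unfold speed_dt. unfold speed in *. continuity_2d. assumption.
Qed.

Lemma is_derive_curvature_density :
  is_derive (fun s => curvature_density X Y u s) t (curvature_density_dt X Y u t).
Proof.
  assert (H := speed2_pos _ _ _ _ Hs).
  unfold curvature_density, curvature_density_dt, cross_u_uu, speed2 in *.
  auto_derive.
  - ex_derive_partial smooth_strip_ex_derive_t. lra.
  - unfold dt. field. lra.
Qed.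

(* Equality of mixed partials turns the u-derivative of theta_t into the t-derivative of
   [curvature_density]: this is the identity d/dt (k ds) = d/du (theta_t). *)
Lemma is_derive_tangent_angle_dt :
  is_derive (fun v => tangent_angle_dt X Y v t) u (curvature_density_dt X Y u t).
Proof.
  assert (H := speed2_pos _ _ _ _ Hs).
  assert (EX : Derive (fun v => dt (du X) v t) u = dt (du (du X)) u t)
    by (apply (smooth_strip_du_dt_comm a); [apply smooth_strip_du|]; assumption).
  assert (EY : Derive (fun v => dt (du Y) v t) u = dt (du (du Y)) u t)
    by (apply (smooth_strip_du_dt_comm a); [apply smooth_strip_du|]; assumption).
  unfold tangent_angle_dt, curvature_density_dt, cross_u_uu, speed2 in *.
  auto_derive.
  - ex_derive_partial smooth_strip_ex_derive_u. lra.
  - rewrite EX, EY. change (Derive (fun v => du X v t) u) with (du (du X) u t).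
    change (Derive (fun v => du Y v t) u) with (du (du Y) u t). field. lra.
Qed.

Lemma is_derive_speed : is_derive (fun s => speed X Y u s) t (speed_dt X Y u t).
Proof.
  assert (H := speed2_pos _ _ _ _ Hs).
  unfold speed_dt. unfold speed, speed2 in *.
  auto_derive.
  - ex_derive_partial smooth_strip_ex_derive_t. lra.
  - unfold dt.
    replace (du X u t * (du X u t * 1) + du Y u t * (du Y u t * 1))
      with (du X u t ^ 2 + du Y u t ^ 2) by ring.
    field. lra.
Qed.

(* Normal motion keeps <gamma_u, gamma_t> = 0 for all u; differentiating this in u
   expresses <gamma_u, gamma_ut> through <gamma_uu, gamma_t>, which is a curvature term. *)
Lemma speed_dt_normal_flow (sigma1 sigma2 : R) :
  (forall v, is_derive (fun s => X v s) t ((sigma1 * curv X Y v t + sigma2) * nux X Y v t) /\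
     is_derive (fun s => Y v s) t ((sigma1 * curv X Y v t + sigma2) * nuy X Y v t)) ->
  speed_dt X Y u t = - ((sigma1 * curv X Y u t + sigma2) * curv X Y u t * speed X Y u t).
Proof.
  intros Hfl.
  assert (HtX : forall v, dt X v t = (sigma1 * curv X Y v t + sigma2) * nux X Y v t)
    by (intro v; apply is_derive_unique, Hfl).
  assert (HtY : forall v, dt Y v t = (sigma1 * curv X Y v t + sigma2) * nuy X Y v t)
    by (intro v; apply is_derive_unique, Hfl).
  assert (Horth : forall v, du X v t * dt X v t + du Y v t * dt Y v t = 0).
  { intro v. rewrite HtX, HtY. unfold nux, nuy, tanx, tany, Rdiv. ring. }
  assert (Hdorth : is_derive (fun v => du X v t * dt X v t + du Y v t * dt Y v t) u
     (du (du X) u t * dt X u t + du X u t * du (dt X) u t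
      + (du (du Y) u t * dt Y u t + du Y u t * du (dt Y) u t))).
  { auto_derive; [ex_derive_partial smooth_strip_ex_derive_u | unfold du; ring]. }
  assert (Hsum : du (du X) u t * dt X u t + du X u t * du (dt X) u t
      + (du (du Y) u t * dt Y u t + du Y u t * du (dt Y) u t) = 0).
  { rewrite <- (is_derive_unique _ _ _ Hdorth), (Derive_ext _ (fun _ => 0)) by apply Horth.
    apply Derive_const. }
  unfold speed_dt. rewrite <- (smooth_strip_du_dt_comm a X), <- (smooth_strip_du_dt_comm a Y)
    by assumption.
  replace (2 * du X u t * du (dt X) u t + 2 * du Y u t * du (dt Y) u t) with
    (- 2 * (du (du X) u t * dt X u t + du (du Y) u t * dt Y u t)) by lra.
  rewrite HtX, HtY. unfold curv, nux, nuy, tanx, tany. field. lra.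
Qed.

End AtRegularPoint.

Hypothesis Hreg : forall u t, 0 <= t -> 0 < speed X Y u t.
Hypothesis Ha : a < 0.

Lemma continuity_2d_pt_curv_mul_speed u t : 0 <= t ->
  continuity_2d_pt (fun u t => curv X Y u t * speed X Y u t) u t.
Proof.
  intros Ht. apply continuity_2d_pt_mult;
    [apply continuity_2d_pt_curv | apply continuity_2d_pt_speed]; auto; lra.
Qed.

Lemma ex_RInt_curv_mul_speed t : 0 <= t -> ex_RInt (fun u => curv X Y u t * speed X Y u t) 0 1.
Proof.
  intros Ht. apply (ex_RInt_continuous (V := R_CompleteNormedModule)). intros z _.
  apply (continuity_2d_pt_continuous_fst (fun u t => curv X Y u t * speed X Y u t)).
  apply continuity_2d_pt_curv_mul_speed, Ht.
Qed.

Lemma curve_length_nonneg t : 0 <= t -> 0 <= curve_length X Y t.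
Proof.
  intros Ht. apply RInt_ge_0; [lra | | intros; apply sqrt_pos].
  apply (ex_RInt_continuous (V := R_CompleteNormedModule)). intros z _.
  apply (continuity_2d_pt_continuous_fst (speed X Y)), continuity_2d_pt_speed; lra.
Qed.

(* Parametric differentiation needs a neighbourhood of regular times, which [t = 0]
   lacks, so the argument starts at some [s > 0] instead. *)
Lemma total_curvature_pos_right :
  0 < total_curvature X Y 0 -> exists s, 0 < s /\ 0 < total_curvature X Y s.
Proof.
  intros H0. assert (He : 0 < total_curvature X Y 0 / 2) by lra.
  destruct (RInt_param_continuous_slices (fun u t => curv X Y u t * speed X Y u t) 0 1 0)
    with (eps := mkposreal _ He) as [d Hd]; [lra | intros; apply continuity_2d_pt_curv_mul_speed; lra |].
  assert (Hd0 := cond_pos d). exists (d / 2). split; [lra |].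
  assert (Hclose := Hd (d / 2) ltac:(rewrite Rminus_0_r, Rabs_pos_eq; lra)
                                (ex_RInt_curv_mul_speed (d / 2) ltac:(lra))).
  apply Rabs_le_between in Hclose. simpl pos in Hclose. unfold total_curvature in *. lra.
Qed.

Hypotheses (HperX : forall u t, X (u + 1) t = X u t) (HperY : forall u t, Y (u + 1) t = Y u t).

Lemma tangent_angle_dt_periodic u t : tangent_angle_dt X Y (u + 1) t = tangent_angle_dt X Y u t.
Proof.
  unfold tangent_angle_dt, speed2.
  rewrite !(du_periodic X), !(du_periodic Y), !(dt_periodic (du X)), !(dt_periodic (du Y));
    try apply du_periodic; try assumption.
  reflexivity.
Qed.

Lemma is_derive_total_curvature t : 0 < t -> is_derive (total_curvature X Y) t 0.
Proof.
  intros Ht.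
  apply (is_derive_ext_loc (fun s => RInt (fun u => curvature_density X Y u s) 0 1)).
  { apply (filter_imp (fun y => 0 < y)); [|apply open_gt, Ht].
    intros y Hy. apply RInt_ext. intros u _. symmetry. apply curv_mul_speed, Hreg. lra. }
  assert (Hreg' : forall u s, 0 < s -> a < s /\ 0 < speed X Y u s)
    by (intros u s Hs; split; [lra | apply Hreg; lra]).
  assert (Hflux : RInt (fun u => curvature_density_dt X Y u t) 0 1 = 0).
  { destruct (Hreg' 0 t Ht) as [Hat _].
    rewrite (RInt_ext _ (Derive (fun v => tangent_angle_dt X Y v t))).
    2:{ intros u _. symmetry. apply is_derive_unique, is_derive_tangent_angle_dt, Hreg'; assumption. }
    rewrite RInt_Derive.
    - replace 1 with (0 + 1) at 1 by ring. rewrite tangent_angle_dt_periodic.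
      apply Rminus_diag_eq. reflexivity.
    - intros x _. eexists. apply is_derive_tangent_angle_dt, Hreg'; assumption.
    - intros x _. apply (continuous_ext (fun v => curvature_density_dt X Y v t)).
      + intro v. symmetry. apply is_derive_unique, is_derive_tangent_angle_dt, Hreg'; assumption.
      + apply (continuity_2d_pt_continuous_fst (curvature_density_dt X Y)),
          continuity_2d_pt_curvature_density_dt, Hreg'; assumption. }
  assert (Hd : is_derive (fun s => RInt (fun u => curvature_density X Y u s) 0 1) t
                  (RInt (fun u => curvature_density_dt X Y u t) 0 1)).
  { apply (is_derive_RInt_param_halfline _ _ 0 1 0 t Ht); intros u s Hs; destruct (Hreg' u s Hs).
    - apply is_derive_curvature_density; assumption.
    - apply continuity_2d_pt_curvature_density_dt; assumption.
    - apply continuity_2d_pt_curvature_density; assumption. }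
  rewrite Hflux in Hd. exact Hd.
Qed.

Lemma total_curvature_const s t : 0 < s <= t -> total_curvature X Y t = total_curvature X Y s.
Proof.
  intros Hst.
  assert (Hd : forall x, s <= x <= t -> is_derive (total_curvature X Y) x 0)
    by (intros x Hx; apply is_derive_total_curvature; lra).
  assert (Hle := increment_le_of_is_derive_le (total_curvature X Y) (fun _ => 0) s t 0
    ltac:(lra) Hd ltac:(intros; lra)).
  assert (Hge := increment_le_of_is_derive_le (fun x => - total_curvature X Y x) (fun _ => 0) s t 0
    ltac:(lra) ltac:(intros x Hx; rewrite <- Ropp_0; apply (is_derive_opp (total_curvature X Y)), Hd, Hx)
    ltac:(intros; lra)).
  lra.
Qed.

Lemma is_derive_curve_length t : 0 < t ->
  is_derive (curve_length X Y) t (RInt (fun u => speed_dt X Y u t) 0 1).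
Proof.
  intros Ht. apply (is_derive_RInt_param_halfline _ _ 0 1 0 t Ht); intros u s Hs.
  - apply is_derive_speed; [lra | apply Hreg; lra].
  - apply continuity_2d_pt_speed_dt; [lra | apply Hreg; lra].
  - apply continuity_2d_pt_speed; lra.
Qed.

Lemma curve_length_dt_le (sigma1 sigma2 t : R) : 0 <= sigma1 -> 0 < t ->
  (forall v, is_derive (fun s => X v s) t ((sigma1 * curv X Y v t + sigma2) * nux X Y v t) /\
     is_derive (fun s => Y v s) t ((sigma1 * curv X Y v t + sigma2) * nuy X Y v t)) ->
  RInt (fun u => speed_dt X Y u t) 0 1 <= - sigma2 * total_curvature X Y t.
Proof.
  intros Hs1 Ht Hfl.
  assert (Hreg' : forall u, a < t /\ 0 < speed X Y u t) by (intro u; split; [lra | apply Hreg; lra]).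
  rewrite (RInt_ext _ (fun u => - ((sigma1 * curv X Y u t + sigma2) * curv X Y u t * speed X Y u t)))
    by (intros u _; destruct (Hreg' u); apply speed_dt_normal_flow; assumption).
  unfold total_curvature.
  rewrite <- (RInt_scal (V := R_CompleteNormedModule)) by (apply ex_RInt_curv_mul_speed; lra).
  apply RInt_le; [lra | | |].
  - apply (ex_RInt_continuous (V := R_CompleteNormedModule)). intros z _.
    apply (continuity_2d_pt_continuous_fst
      (fun u t => - ((sigma1 * curv X Y u t + sigma2) * curv X Y u t * speed X Y u t))).
    destruct (Hreg' z).
    assert (Hk := continuity_2d_pt_curv z t ltac:(assumption) ltac:(assumption)).
    assert (Hv := continuity_2d_pt_speed z t ltac:(assumption)).
    repeat first [ assumption | apply continuity_2d_pt_opp | apply continuity_2d_pt_mult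
      | apply continuity_2d_pt_plus | apply continuity_2d_pt_const ].
  - apply (ex_RInt_scal (V := R_NormedModule)), ex_RInt_curv_mul_speed. lra.
  - intros u _. destruct (Hreg' u) as [_ Hsp]. simpl.
    assert (0 <= sigma1 * (curv X Y u t * curv X Y u t) * speed X Y u t).
    { apply Rmult_le_pos; [apply Rmult_le_pos|]; nra. }
    unfold scal; simpl; unfold mult; simpl. nra.
Qed.

Lemma curve_length_linear_decay (sigma1 sigma2 s t : R) : 0 <= sigma1 -> 0 < s <= t ->
  (forall v x, 0 < x ->
     is_derive (fun s => X v s) x ((sigma1 * curv X Y v x + sigma2) * nux X Y v x) /\
     is_derive (fun s => Y v s) x ((sigma1 * curv X Y v x + sigma2) * nuy X Y v x)) ->
  curve_length X Y t <= curve_length X Y s + - (sigma2 * total_curvature X Y s) * (t - s).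
Proof.
  intros Hs1 Hst Hfl.
  apply (increment_le_of_is_derive_le _ (fun x => RInt (fun u => speed_dt X Y u x) 0 1));
    [lra | intros x Hx; apply is_derive_curve_length; lra |].
  intros x Hx. cbv beta. rewrite Ropp_mult_distr_l, <- (total_curvature_const s x) by lra.
  apply (curve_length_dt_le sigma1); [exact Hs1 | lra |]. intro v. apply Hfl. lra.
Qed.

End SmoothCurveFamily.

Theorem lemma2p6 (sigma1 sigma2 : R) (T : Rbar) (X Y : R -> R -> R) :
  0 < sigma1 -> 0 < sigma2 ->
  (* smooth family on S^1 x [0,T) (smooth up to t = 0) *)
  (exists a, a < 0 /\ smooth_strip a T X /\ smooth_strip a T Y) ->
  (* closed: 1-periodic in u *)
  (forall u t, X (u + 1) t = X u t /\ Y (u + 1) t = Y u t) ->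
  (* regular curves *)
  (forall u t, 0 <= t -> Rbar_lt (Finite t) T -> 0 < speed X Y u t) ->
  (* embedded curves *)
  (forall t, 0 <= t -> Rbar_lt (Finite t) T ->
     forall u1 u2, 0 <= u1 < 1 -> 0 <= u2 < 1 ->
       X u1 t = X u2 t -> Y u1 t = Y u2 t -> u1 = u2) ->
  (* the flow d/dt gamma = (sigma1 k + sigma2) nu *)
  (forall u t, 0 <= t -> Rbar_lt (Finite t) T ->
     is_derive (fun s => X u s) t ((sigma1 * curv X Y u t + sigma2) * nux X Y u t) /\
     is_derive (fun s => Y u s) t ((sigma1 * curv X Y u t + sigma2) * nuy X Y u t)) ->
  (* positive winding number of the initial curve *)
  0 < winding X Y 0 ->
  T <> p_infty.
Proof.
  intros Hs1 Hs2 [a [Ha [HX HY]]] Hper Hreg _ Hfl Hw ->.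
  assert (Hreg' : forall u t, 0 <= t -> 0 < speed X Y u t) by (intros; apply Hreg; easy).
  assert (HperX : forall u t, X (u + 1) t = X u t) by apply Hper.
  assert (HperY : forall u t, Y (u + 1) t = Y u t) by apply Hper.
  assert (HTh0 : 0 < total_curvature X Y 0).
  { rewrite total_curvature_winding. assert (H := PI_RGT_0). nra. }
  destruct (total_curvature_pos_right a X Y) as [s [Hs HThs]]; auto.
  apply (nonneg_no_linear_decay (curve_length X Y) s (sigma2 * total_curvature X Y s)).
  - nra.
  - intros t Ht. eapply curve_length_nonneg; eauto. lra.
  - intros t Ht. eapply curve_length_linear_decay with (sigma1 := sigma1); eauto; try lra.
    intros v x Hx. apply Hfl; [lra | exact I].
Qed.
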